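(* For every set of formulas $\Gamma$ and formula $\alpha$: $\circ^{\#}(Var(\Gamma\cup\{\alpha\})),\Gamma\vdash_{LFI3}\alpha$ if and only if $\Gamma\vdash_{LFI1}\alpha$, where $\circ^{\#}(X)=\{\circ^{\#}p: p\in X\}$.
   Context: Formulas are built from a countable set of propositional variables using unary $\neg,\circ$ and binary $\land,\lor,\to$. Define $\bullet\alpha:=\neg\circ\alpha$, $\circ^*\alpha:=(\alpha\land\circ\alpha\land\circ\circ\alpha)\lor(\neg\alpha\land\circ\alpha\land\circ\circ\alpha)$ and $\circ^{\#}\alpha:=\circ^*\alpha\lor(\bullet\alpha\land\circ\circ\alpha)$. $Var(\Delta)$ is the set of propositional variables occurring in $\Delta$. On $\{0,1\}$ use Boolean $\land,\lor,\to,\sim$. Let $\mathbb{B}=\{x\in\{0,1\}^3: x_1\lor x_2=1,\ x_3\lor\sim(x_1\land x_2)=1\}$. The LFI3 algebra on $\mathbb{B}$: $a\dot\land b=(a_1\land b_1,\ a_2\lor b_2,\ (\sim a_2\land b_3)\lor(a_3\land\sim b_2)\lor(a_3\land b_3))$; $a\dot\lor b=(a_1\lor b_1,\ a_2\land b_2,\ (\sim a_1\land b_3)\lor(a_3\land\sim b_1)\lor(a_3\land b_3))$; $a\dot\to b=(a_1\to b_1,\ b_2\land(\sim a_2\lor a_3),\ (\sim a_2\land b_3)\lor(\sim a_2\land a_3\land\sim b_1)\lor(a_3\land b_3)\lor(\sim a_1\land a_3\land\sim b_1))$; $\dot\neg a=(a_2,a_1,a_3)$; $\dot\circ a=(\sim(a_1\land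 a_2),a_3,a_3\land\sim(a_1\land a_2))$; designated set $\{x:x_1=1\}$. LFI1 is the three-valued matrix logic on $\{1,\frac12,0\}$ with designated set $\{1,\frac12\}$, $\land=\min$, $\lor=\max$ (order $0<\frac12<1$), $a\to c=1$ if $a=0$ and $a\to c=c$ otherwise, $\neg1=0$, $\neg\frac12=\frac12$, $\neg0=1$, $\circ1=\circ0=1$, $\circ\frac12=0$. For both matrix logics, $\Gamma\vdash\alpha$ iff every homomorphic valuation designating all of $\Gamma$ designates $\alpha$. *)

From Stdlib Require Import Bool.

Inductive formula : Type :=
| Var : nat -> formula
| Neg : formula -> formula
| Circ : formula -> formula
| And : formula -> formula -> formula
| Or : formula -> formula -> formula
| Imp : formula -> formula -> formula.

Definition bullet (a : formula) : formula := Neg (Circ a).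

Definition circ_star (a : formula) : formula :=
  Or (And (And a (Circ a)) (Circ (Circ a)))
     (And (And (Neg a) (Circ a)) (Circ (Circ a))).

Definition circ_sharp (a : formula) : formula :=
  Or (circ_star a) (And (bullet a) (Circ (Circ a))).

Fixpoint occurs (p : nat) (f : formula) : Prop :=
  match f with
  | Var q => p = q
  | Neg a | Circ a => occurs p a
  | And a b | Or a b | Imp a b => occurs p a \/ occurs p b
  end.

Definition fset := formula -> Prop.

Definition VarsOf (Gamma : fset) (alpha : formula) (p : nat) : Prop :=
  (exists g, Gamma g /\ occurs p g) \/ occurs p alpha.

Definition circ_sharp_set (X : nat -> Prop) : fset :=
  fun f => exists p, X p /\ f = circ_sharp (Var p).

Definition union (A B : fset) : fset := fun f => A f \/ B f.

Definition tri := (bool * bool * bool)%type.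
Definition c1 (a : tri) : bool := fst (fst a).
Definition c2 (a : tri) : bool := snd (fst a).
Definition c3 (a : tri) : bool := snd a.

Definition inB (x : tri) : Prop :=
  (c1 x || c2 x) = true /\ (c3 x || negb (c1 x && c2 x)) = true.

Definition impb (x y : bool) : bool := implb x y.

Definition and3 (a b : tri) : tri :=
  (c1 a && c1 b, c2 a || c2 b,
   (negb (c2 a) && c3 b) || (c3 a && negb (c2 b)) || (c3 a && c3 b)).

Definition or3 (a b : tri) : tri :=
  (c1 a || c1 b, c2 a && c2 b,
   (negb (c1 a) && c3 b) || (c3 a && negb (c1 b)) || (c3 a && c3 b)).

Definition imp3 (a b : tri) : tri :=
  (impb (c1 a) (c1 b),
   c2 b && (negb (c2 a) || c3 a),
   (negb (c2 a) && c3 b) || (negb (c2 a) && c3 a && negb (c1 b))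
   || (c3 a && c3 b) || (negb (c1 a) && c3 a && negb (c1 b))).

Definition neg3 (a : tri) : tri := (c2 a, c1 a, c3 a).

Definition circ3 (a : tri) : tri :=
  (negb (c1 a && c2 a), c3 a, c3 a && negb (c1 a && c2 a)).

Fixpoint eval3 (v : nat -> tri) (f : formula) : tri :=
  match f with
  | Var p => v p
  | Neg a => neg3 (eval3 v a)
  | Circ a => circ3 (eval3 v a)
  | And a b => and3 (eval3 v a) (eval3 v b)
  | Or a b => or3 (eval3 v a) (eval3 v b)
  | Imp a b => imp3 (eval3 v a) (eval3 v b)
  end.

Definition des3 (x : tri) : Prop := c1 x = true.

(* Homomorphic valuations into the LFI3 algebra on B are exactly the
   eval3 v with v mapping every variable into B. *)
Definition LFI3_cons (Gamma : fset) (alpha : formula) : Prop :=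
  forall v : nat -> tri, (forall p, inB (v p)) ->
    (forall g, Gamma g -> des3 (eval3 v g)) -> des3 (eval3 v alpha).

Inductive V3 : Type := One | Half | Zero.

Definition rank (x : V3) : nat :=
  match x with Zero => 0 | Half => 1 | One => 2 end.

Definition min1 (a b : V3) : V3 := if Nat.leb (rank a) (rank b) then a else b.
Definition max1 (a b : V3) : V3 := if Nat.leb (rank a) (rank b) then b else a.

Definition imp1 (a c : V3) : V3 :=
  match a with Zero => One | _ => c end.

Definition neg1 (a : V3) : V3 :=
  match a with One => Zero | Half => Half | Zero => One end.

Definition circ1 (a : V3) : V3 :=
  match a with Half => Zero | _ => One end.

Fixpoint eval1 (v : nat -> V3) (f : formula) : V3 :=
  match f with
  | Var p => v p
  | Neg a => neg1 (eval1 v a)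
  | Circ a => circ1 (eval1 v a)
  | And a b => min1 (eval1 v a) (eval1 v b)
  | Or a b => max1 (eval1 v a) (eval1 v b)
  | Imp a b => imp1 (eval1 v a) (eval1 v b)
  end.

Definition des1 (x : V3) : Prop := x = One \/ x = Half.

Definition LFI1_cons (Gamma : fset) (alpha : formula) : Prop :=
  forall v : nat -> V3,
    (forall g, Gamma g -> des1 (eval1 v g)) -> des1 (eval1 v alpha).

(* LFI1 is (isomorphic to) the subalgebra {(1,0,0), (1,1,1), (0,1,0)} of the
   LFI3 algebra, with the same designated elements.  In LFI1 every formula
   o#a is designated, while in LFI3 o#a is designated exactly when the value
   of a lies in that subalgebra.  Hence the premises o#p for the relevant
   variables p cut the LFI3 valuations down to copies of LFI1 valuations. *)

From Stdlib Require Import Bool.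

Definition tri_of_V3 (x : V3) : tri :=
  match x with
  | One => (true, false, false)
  | Half => (true, true, true)
  | Zero => (false, true, false)
  end.

(* A retraction of [tri_of_V3]; its values outside the image are irrelevant. *)
Definition V3_of_tri (x : tri) : V3 :=
  match x with
  | (true, false, _) => One
  | (true, true, _) => Half
  | _ => Zero
  end.

Lemma tri_of_V3_inB (x : V3) : inB (tri_of_V3 x).
Proof. destruct x; split; reflexivity. Qed.

Lemma des3_tri_of_V3 (x : V3) : des3 (tri_of_V3 x) <-> des1 x.
Proof. unfold des3, des1; destruct x; cbv; intuition discriminate. Qed.

Lemma eval3_tri_of_V3 (w : nat -> V3) (f : formula) :
  eval3 (fun p => tri_of_V3 (w p)) f = tri_of_V3 (eval1 w f).
Proof.
  induction f; simpl; try rewrite IHf; try rewrite IHf1, IHf2; try reflexivity;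
  repeat match goal with |- context [eval1 w ?a] => destruct (eval1 w a) end;
  reflexivity.
Qed.

Lemma eval3_ext (v v' : nat -> tri) (f : formula) :
  (forall p, occurs p f -> v p = v' p) -> eval3 v f = eval3 v' f.
Proof.
  induction f; simpl; intros Hvv'; try rewrite IHf; try rewrite IHf1, IHf2; auto.
Qed.

Lemma eval3_retract (v : nat -> tri) (f : formula) :
  (forall p, occurs p f -> v p = tri_of_V3 (V3_of_tri (v p))) ->
  eval3 v f = tri_of_V3 (eval1 (fun p => V3_of_tri (v p)) f).
Proof.
  intros Hv. rewrite <- eval3_tri_of_V3. exact (eval3_ext _ _ f Hv).
Qed.

Lemma des1_circ_sharp (w : nat -> V3) (a : formula) :
  des1 (eval1 w (circ_sharp a)).
Proof. unfold des1; simpl; destruct (eval1 w a); simpl; auto. Qed.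

Lemma des3_circ_sharp_retract (v : nat -> tri) (a : formula) :
  inB (eval3 v a) -> des3 (eval3 v (circ_sharp a)) ->
  eval3 v a = tri_of_V3 (V3_of_tri (eval3 v a)).
Proof.
  unfold des3, inB; simpl.
  destruct (eval3 v a) as [[[|] [|]] [|]]; cbv; intuition discriminate.
Qed.

Theorem theorem20 (Gamma : fset) (alpha : formula) :
  LFI3_cons (union (circ_sharp_set (VarsOf Gamma alpha)) Gamma) alpha
  <-> LFI1_cons Gamma alpha.
Proof.
  split.
  - intros H3 w Hw.
    apply des3_tri_of_V3. rewrite <- eval3_tri_of_V3.
    apply H3; [intros p; apply tri_of_V3_inB |].
    intros f [[p [_ ->]] | Hf]; rewrite eval3_tri_of_V3; apply des3_tri_of_V3.
    + apply des1_circ_sharp.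
    + exact (Hw f Hf).
  - intros H1 v Hv HGamma.
    assert (Hvars : forall p, VarsOf Gamma alpha p ->
                      v p = tri_of_V3 (V3_of_tri (v p))).
    { intros p Hp.
      apply (des3_circ_sharp_retract v (Var p)); [apply Hv |].
      apply HGamma. left. exists p. split; [exact Hp | reflexivity]. }
    rewrite eval3_retract by (intros p Hp; apply Hvars; right; exact Hp).
    apply des3_tri_of_V3, H1.
    intros f Hf. apply des3_tri_of_V3.
    rewrite <- eval3_retract by (intros p Hp; apply Hvars; left; exists f; auto).
    apply HGamma. right. exact Hf.
Qed.
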